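(* Let $\mathcal{G}=(\mathcal{V},\mathcal{E})$ be an unweighted finite simple graph and $f:\mathcal{V}\to\mathbb{R}$ a filtering function. Let $u\in\mathcal{V}$ be dominated by $v\in\mathcal{V}$, and suppose $f(u)\geq f(v)$. Then for every $k\geq 0$, $$PD_k(\mathcal{G},f)=PD_k(\mathcal{G}-\{u\},f),$$ where on the right $f$ is restricted to $\mathcal{V}\setminus\{u\}$ and the same threshold set is used.
   Context: For a vertex $w$, $N(w)=\{w\}\cup\{x: \{w,x\}\in\mathcal{E}\}$ is its closed neighborhood; $u$ is dominated by $v\neq u$ if $N(u)\subset N(v)$. $\mathcal{G}-\{u\}$ is obtained by deleting $u$ and all its incident edges. For $f:\mathcal{V}\to\mathbb{R}$, let $\alpha_0<\dots<\alpha_m$ be thresholds with $\alpha_0=\min f$, $\alpha_m=\max f$; $\mathcal{G}_i$ is the subgraph induced by $\{w: f(w)\le\alpha_i\}$ and $\widehat{\mathcal{G}}_i$ its clique (flag) complex (simplices = sets of pairwise adjacent vertices). $PD_k(\mathcal{G},f)$ is the $k$-th persistence diagram (field coefficients) of the sublevel filtration $\widehat{\mathcal{G}}_0\subset\dots\subset\widehat{\mathcal{G}}_m$; for a subgraph the same construction is applied with the restricted $f$ and the same thresholds. *)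

From HB Require Import structures.
From mathcomp Require Import all_boot all_order all_algebra.
From mathcomp Require Import reals.
Set Implicit Arguments. Unset Strict Implicit. Unset Printing Implicit Defensive.
Import Order.TTheory GRing.Theory Num.Theory.
Local Open Scope ring_scope.

(* Graphs: vertex type V : finType, adjacency e : rel V (symmetric,
   irreflexive); a (sub)graph is given by its vertex set W : {set V},
   edges being those of e between vertices of W (induced subgraph). *)

Section Graphs.
Variable V : finType.
Variable e : rel V.

Definition simple_graph := symmetric e /\ irreflexive e.

Definition closed_nbhd (w : V) : {set V} := w |: [set x | e w x].

Definition dominated (u v : V) : Prop := v != u /\ closed_nbhd u \subset closed_nbhd v.

Definition sublevel_clique_complex (R : realType) (W : {set V}) (f : V -> R) (a : R)
  : {set {set V}} :=
  [set s : {set V} | [&& s != set0, s \subset W,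
     [forall x in s, f x <= a] &
     [forall x in s, forall y in s, (x != y) ==> e x y]]].
End Graphs.

(* Simplicial chains with coefficients in a field F, realised as row vectors
   indexed by all subsets of V (a k-simplex is a set of size k+1).
   Orientation: the vertices are ordered by enum_rank. *)
Section Chains.
Variables (V : finType) (F : fieldType).

Definition nS := #|{: {set V}}|.
Definition sx (i : 'I_nS) : {set V} := enum_val i.

Definition bsign (x : V) (s : {set V}) : F :=
  (-1) ^+ #|[set y in s | (enum_rank y < enum_rank x)%N]|.

(* boundary matrix (row-vector convention: c |-> c *m bdry) of the
   (non-augmented) simplicial chain complex *)
Definition bdry : 'M[F]_nS :=
  \matrix_(a, b) (if sx b == set0 then 0 else
     \sum_(x in sx a | sx b == sx a :\ x) bsign x (sx a)).

Definition kchains (K : {set {set V}}) (k : nat) : 'M[F]_nS :=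
  diag_mx (\row_a (if (sx a \in K) && (#|sx a| == k.+1) then 1 else 0)).

Definition cycles (K : {set {set V}}) (k : nat) : 'M[F]_nS :=
  (kchains K k :&: kermx bdry)%MS.
Definition boundaries (K : {set {set V}}) (k : nat) : 'M[F]_nS :=
  (kchains K k.+1 *m bdry)%MS.

(* persistent Betti number beta_k^{K,L} = dim Z_k(K) / (B_k(L) \cap Z_k(K))
   = dim of the image of H_k(K) -> H_k(L)  (for K \subset L) *)
Definition pbetti (K L : {set {set V}}) (k : nat) : nat :=
  (\rank (cycles K k) - \rank (cycles K k :&: boundaries L k))%N.
End Chains.

(* PD k i j is the multiplicity of the point (alpha i, alpha j) for 0 <= i < j <= m,
   and PD k i (m+1) the multiplicity of the essential point (alpha i, +oo), i <= m;
   all other entries are 0 (standard Edelsbrunner--Harer definition). *)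
Definition PD (F : fieldType) (V : finType) (e : rel V) (W : {set V})
  (R : realType) (f : V -> R) (alpha : nat -> R) (m k : nat) : nat -> nat -> int :=
  fun i j =>
  let K := fun t => sublevel_clique_complex e W f (alpha t) in
  let b := fun s t => (pbetti F (K s) (K t) k)%:Z in
  if (i < j <= m)%N then
    (b i j.-1 - b i j) - (if i == 0%N then 0 else b i.-1 j.-1 - b i.-1 j)
  else if (i <= m)%N && (j == m.+1) then
    b i m - (if i == 0%N then 0 else b i.-1 m)
  else 0.

From HB Require Import structures.
From mathcomp Require Import all_boot all_order all_algebra.
From mathcomp Require Import ring zify.
From mathcomp Require Import reals.
From Stdlib Require Import FunctionalExtensionality.
Set Implicit Arguments. Unset Strict Implicit. Unset Printing Implicit Defensive.
Import Order.TTheory GRing.Theory Num.Theory.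
Local Open Scope ring_scope.

(* Cone off the dominating vertex v: for a clique s with u in s and v not in s,
   v |: s is again a clique of the same sublevel, because N(u) is contained in N(v)
   and f v <= f u.  The map h s = +-(v |: s) is thus a chain homotopy on every
   sublevel complex, and P = 1 - (h d + d h) is a chain map homotopic to the identity
   which kills simplices containing both u and v, sends s to +-((v |: s) :\ u) when
   only u lies in s, and fixes every simplex avoiding u.  So P retracts the complex
   with u onto the complex without u, compatibly with the inclusions of the
   filtration; it therefore preserves all persistent Betti numbers, which determine
   the persistence diagram. *)

Section HomotopyRetract.
Variables (F : fieldType) (n : nat) (D H : 'M[F]_n).
Hypothesis D2 : D *m D = 0.

Local Notation Q := (H *m D + D *m H).
Local Notation P := (1%:M - Q).

Lemma retract_bdry_comm : P *m D = D *m P.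
Proof.
rewrite mulmxBl mulmxBr mul1mx mulmx1 mulmxDl mulmxDr.
by rewrite -!mulmxA D2 mulmx0 !mulmxA D2 mul0mx add0r addr0.
Qed.

Variables (CK CK' CL CL' : 'M[F]_n).
Hypotheses (sK : (CK' <= CK)%MS) (sL : (CL' <= CL)%MS).
Hypotheses (PK : (CK *m P <= CK')%MS) (PL : (CL *m P <= CL')%MS).
Hypothesis HKL : (CK *m H <= CL)%MS.
Hypothesis QK' : CK' *m Q = 0.

Local Notation Z := (CK :&: kermx D)%MS.
Local Notation Z' := (CK' :&: kermx D)%MS.
Local Notation B := (CL *m D)%MS.
Local Notation B' := (CL' *m D)%MS.

Lemma retract_id m (X : 'M_(m, n)) : (X <= CK')%MS -> X *m P = X.
Proof. by case/submxP=> Y ->; rewrite mulmxBr mulmx1 -mulmxA QK' mulmx0 subr0. Qed.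

Lemma retract_cycles : (Z *m P == Z')%MS.
Proof.
apply/andP; split; last by rewrite -{1}(retract_id (capmxSl CK' _)) submxMr ?capmxS.
rewrite sub_capmx (submx_trans (submxMr P (capmxSl _ _)) PK) /=.
by apply/sub_kermxP; rewrite -mulmxA retract_bdry_comm mulmxA (sub_kermxP (capmxSr _ _)) mul0mx.
Qed.

Lemma retract_cycle_boundaries : ((Z :&: B) *m P == Z' :&: B')%MS.
Proof.
apply/andP; split.
  rewrite sub_capmx (submx_trans (submxMr P (capmxSl _ _)) (proj1 (andP retract_cycles))) /=.
  apply: (@submx_trans _ _ _ _ _ _ (CL *m P *m D)); last exact: submxMr.
  by rewrite -mulmxA retract_bdry_comm mulmxA submxMr ?capmxSr.
rewrite -{1}(@retract_id _ (Z' :&: B')%MS) ?submxMr ?capmxS ?submxMr //.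
exact: submx_trans (capmxSl _ _) (capmxSl _ _).
Qed.

(* A cycle killed by P equals (H z) D since P + Q = 1, so it is a boundary in CL. *)
Lemma retract_kernel_boundaries : (Z :&: kermx P == (Z :&: B) :&: kermx P)%MS.
Proof.
apply/andP; split; last by rewrite capmxS ?capmxSl.
rewrite sub_capmx capmxSr andbT sub_capmx capmxSl /=.
set X := (Z :&: kermx P)%MS.
have XP : X *m P = 0 by apply/sub_kermxP; exact: capmxSr.
have XD : X *m D = 0.
  by apply/sub_kermxP; apply: submx_trans (capmxSl _ _) _; exact: capmxSr.
have -> : X = X *m H *m D.
  have PQ : P + Q = 1%:M by rewrite subrK.
  have := congr1 (mulmx X) PQ; rewrite mulmx1 mulmxDr XP add0r mulmxDr.
  by rewrite [X *m (D *m H)]mulmxA XD mul0mx addr0 mulmxA => ->.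
apply/submxMr/(submx_trans _ HKL)/submxMr.
exact: submx_trans (capmxSl _ _) (capmxSl _ _).
Qed.

Lemma persistent_rank_retract :
  (\rank Z - \rank (Z :&: B) = \rank Z' - \rank (Z' :&: B'))%N.
Proof.
have rZ := mxrank_mul_ker Z P.
have rZB := mxrank_mul_ker (Z :&: B)%MS P.
rewrite (eqmx_rank retract_cycles) (eqmx_rank retract_kernel_boundaries) in rZ.
rewrite (eqmx_rank retract_cycle_boundaries) in rZB.
by rewrite -rZ -rZB subnDr.
Qed.

End HomotopyRetract.

Section Boundary.
Variables (V : finType) (F : fieldType).

Lemma sum_sx (g : {set V} -> F) : \sum_(j < nS V) g (sx j) = \sum_(r : {set V}) g r.
Proof.
rewrite (reindex (@enum_rank _)) /=; last first.
  by exists enum_val => x _; [exact: enum_rankK | exact: enum_valK].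
by apply: eq_bigr => r _; rewrite /sx enum_rankK.
Qed.

Definition bdry_coef (s t : {set V}) : F :=
  if t == set0 then 0 else \sum_(x in s | t == s :\ x) bsign F x s.

Lemma bdryE a b : bdry V F a b = bdry_coef (sx a) (sx b).
Proof. by rewrite mxE. Qed.

Lemma bdry_coef_face (s : {set V}) (x : V) :
  x \in s -> s :\ x != set0 -> bdry_coef s (s :\ x) = bsign F x s.
Proof.
move=> xs sx0; rewrite /bdry_coef (negbTE sx0) (big_pred1 x) // => y /=.
apply/andP/eqP => [[ys /eqP E]|->]; last by rewrite xs.
apply/eqP; apply: contraT => yx.
have : y \in s :\ x by rewrite !inE yx.
by rewrite E !inE eqxx.
Qed.

Lemma bdry_coef_neq0 (s t : {set V}) :
  bdry_coef s t != 0 -> exists2 x, x \in s & t = s :\ x.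
Proof.
rewrite /bdry_coef; case: ifP => [_|_]; first by rewrite eqxx.
case: (pickP [pred x | (x \in s) && (t == s :\ x)]) => [x /andP[xs /eqP ->]|P0].
  by exists x.
by rewrite big_pred0 ?eqxx.
Qed.

Definition nbelow (s : {set V}) (x : V) :=
  #|[set y in s | (enum_rank y < enum_rank x)%N]|.

Lemma bsignE (x : V) (s : {set V}) : bsign F x s = (-1) ^+ nbelow s x.
Proof. by []. Qed.

Lemma nbelowD1 (s : {set V}) (x y : V) :
  x \in s -> nbelow s y = (nbelow (s :\ x) y + (enum_rank x < enum_rank y))%N.
Proof.
move=> xs; rewrite /nbelow (cardsD1 x [set z in s | _]) inE xs /= addnC.
by congr (_ + _)%N; apply: eq_card => z; rewrite !inE andbA.
Qed.

Lemma nbelowU1 (s : {set V}) (x y : V) :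
  x \notin s -> nbelow (x |: s) y = (nbelow s y + (enum_rank x < enum_rank y))%N.
Proof. by move=> xs; rewrite (nbelowD1 _ (setU11 x s)) setU1K. Qed.

Lemma enum_rank_ltgt (x y : V) : x != y ->
  ((enum_rank x < enum_rank y)%N && ~~ (enum_rank y < enum_rank x)%N) ||
  ((enum_rank y < enum_rank x)%N && ~~ (enum_rank x < enum_rank y)%N).
Proof.
move=> xy; case: (ltngtP (enum_rank x) (enum_rank y)) => //= E.
by move: xy; rewrite (enum_rank_inj (val_inj E)) eqxx.
Qed.

Lemma sqr_bsign (x : V) (s : {set V}) : bsign F x s * bsign F x s = 1.
Proof. by rewrite -expr2 sqrr_sign. Qed.

Lemma sum_alternating_eq0 (G : V -> V -> F) : (forall x, G x x = 0) ->
  (forall x y, G x y + G y x = 0) -> \sum_x \sum_y G x y = 0.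
Proof.
move=> G0 GA.
rewrite pair_bigA /= (bigID (fun p : V * V => (enum_rank p.1 < enum_rank p.2)%N)) /=.
have -> : \sum_(p | ~~ (enum_rank p.1 < enum_rank p.2)%N) G p.1 p.2 =
          \sum_(p | (enum_rank p.2 < enum_rank p.1)%N) G p.1 p.2.
  rewrite big_mkcond [RHS]big_mkcond; apply: eq_bigr => -[x y] _ /=.
  case: (ltngtP (enum_rank x) (enum_rank y)) => // E.
  by rewrite (enum_rank_inj (val_inj E)) G0.
pose sw (p : V * V) := (p.2, p.1).
have swK : involutive sw by case.
rewrite (reindex_inj (inv_inj swK)) /= -big_split /=.
by apply: big1 => -[x y] _; rewrite GA.
Qed.

(* The two ways of removing x and y from s carry opposite signs. *)
Lemma bdry_coef_comp (s t : {set V}) : \sum_r bdry_coef s r * bdry_coef r t = 0.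
Proof.
case t0: (t == set0).
  by apply: big1 => r _; rewrite [bdry_coef r t]/bdry_coef t0 mulr0.
have E1 r : bdry_coef s r * bdry_coef r t =
    \sum_x (if (x \in s) && (r == s :\ x) then bsign F x s * bdry_coef r t else 0).
  rewrite -big_mkcond -big_distrl /= /bdry_coef; case: eqP => // ->.
  have empty : \sum_(x in set0 | t == set0 :\ x) bsign F x (set0 : {set V}) = 0.
    by rewrite big_pred0 // => x; rewrite in_set0.
  by rewrite t0 empty !mulr0.
rewrite (eq_bigr _ (fun r _ => E1 r)) exchange_big /=.
under eq_bigr => x _ do rewrite -big_mkcond /=.
have E2 x : \sum_(r | (x \in s) && (r == s :\ x)) bsign F x s * bdry_coef r t =
   \sum_y (if [&& x \in s, y \in s :\ x & t == s :\ x :\ y]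
           then bsign F x s * bsign F y (s :\ x) else 0).
  case xs: (x \in s) => /=; last by rewrite big_pred0 // big1.
  rewrite (big_pred1 (s :\ x)) // /bdry_coef t0 big_distrr big_mkcond /=.
  by apply: eq_bigr => y _; case: ifP.
rewrite (eq_bigr _ (fun x _ => E2 x)); apply: sum_alternating_eq0 => [x|x y].
  by rewrite !inE eqxx /= andbF.
case: (eqVneq x y) => [->|xy]; first by rewrite !inE eqxx /= andbF addr0.
have -> : s :\ y :\ x = s :\ x :\ y by rewrite !setDDl setUC.
rewrite !inE eq_sym (negbTE xy) /=.
case xs: (x \in s); case ys: (y \in s) => //=; rewrite ?addr0 //.
case: (t == _) => //=; last by rewrite addr0.
rewrite !bsignE (nbelowD1 x ys) (nbelowD1 y xs) !exprD.
by case/orP: (enum_rank_ltgt xy) => /andP[-> /negbTE ->] /=; ring.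
Qed.

Lemma bdry_mul_bdry : bdry V F *m bdry V F = 0.
Proof.
apply/matrixP => a b; rewrite !mxE.
under eq_bigr => j _ do rewrite !bdryE.
by rewrite (sum_sx (fun r => bdry_coef (sx a) r * bdry_coef r (sx b))) bdry_coef_comp.
Qed.

Local Notation diag_ind P := (diag_mx (\row_a (if P (sx a) then 1 else 0))).

Lemma sub_diag_ind (A : 'M[F]_(nS V)) (P : pred {set V}) :
  (forall i j, A i j != 0 -> P (sx j)) -> (A <= diag_ind P)%MS.
Proof.
move=> HA; have -> : A = A *m diag_ind P.
  apply/matrixP => i j; rewrite mul_mx_diag !mxE.
  case: ifP; rewrite ?mulr1 ?mulr0 // => Pj.
  by apply/eqP; apply: contraFT Pj => /HA.
exact: submxMl.
Qed.

Lemma diag_ind_neq0 (P : pred {set V}) i j : diag_ind P i j != 0 :> F -> P (sx j).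
Proof.
by rewrite !mxE; case: (i =P j) => [->|_]; case: ifP; rewrite ?mulr0n ?mulr1n ?mul0rn ?eqxx.
Qed.

Lemma diag_ind_mul_neq0 (P : pred {set V}) (M : 'M[F]_(nS V)) i j :
  (diag_ind P *m M) i j != 0 -> P (sx i) /\ M i j != 0.
Proof. by rewrite mul_diag_mx !mxE; case: ifP; rewrite ?mul0r ?eqxx // mul1r. Qed.

Lemma sub_kchains (K : {set {set V}}) k (A : 'M[F]_(nS V)) :
  (forall i j, A i j != 0 -> (sx j \in K) && (#|sx j| == k.+1)) ->
  (A <= kchains F K k)%MS.
Proof. exact: (sub_diag_ind (P := fun s => (s \in K) && (#|s| == k.+1))). Qed.

Lemma kchains_neq0 (K : {set {set V}}) k i j :
  kchains F K k i j != 0 -> (sx j \in K) && (#|sx j| == k.+1).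
Proof. exact: (diag_ind_neq0 (P := fun s => (s \in K) && (#|s| == k.+1))). Qed.

Lemma kchains_mul_neq0 (K : {set {set V}}) k (M : 'M[F]_(nS V)) i j :
  (kchains F K k *m M) i j != 0 -> ((sx i \in K) && (#|sx i| == k.+1)) /\ M i j != 0.
Proof. exact: (diag_ind_mul_neq0 (P := fun s => (s \in K) && (#|s| == k.+1))). Qed.

End Boundary.

Section Cone.
Variables (V : finType) (F : fieldType) (u v : V).
Hypothesis uv : u != v.

(* The sign makes v the face removed by the boundary: [bdry_coef (v |: s) s = cone_sign s]. *)
Definition cone_sign (s : {set V}) : F := bsign F v (v |: s).

Definition cone_coef (s t : {set V}) : F :=
  if [&& u \in s, v \notin s & t == v |: s] then cone_sign s else 0.

Definition cone_mx : 'M[F]_(nS V) := \matrix_(a, b) cone_coef (sx a) (sx b).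

Definition homotopy_coef (s t : {set V}) : F :=
  (if (u \in s) && (v \notin s) then cone_sign s * bdry_coef F (v |: s) t else 0) +
  (if (u \in t) && (v \in t) then bdry_coef F s (t :\ v) * cone_sign (t :\ v) else 0).

Lemma sum_cone_bdry (s t : {set V}) : \sum_r cone_coef s r * bdry_coef F r t =
  if (u \in s) && (v \notin s) then cone_sign s * bdry_coef F (v |: s) t else 0.
Proof.
rewrite /cone_coef; case: ifP => C.
  case/andP: C => us vs.
  rewrite (bigD1 (v |: s)) //= us vs eqxx big1 ?addr0 // => r /negbTE rv.
  by rewrite rv andbF mul0r.
by apply: big1 => r _; rewrite andbA C mul0r.
Qed.

Lemma sum_bdry_cone (s t : {set V}) : \sum_r bdry_coef F s r * cone_coef r t =
  if (u \in t) && (v \in t) then bdry_coef F s (t :\ v) * cone_sign (t :\ v) else 0.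
Proof.
rewrite (bigD1 (t :\ v)) //= big1 ?addr0; last first.
  move=> r rt; rewrite /cone_coef; case: ifP => [/and3P[_ vr /eqP E]|_]; last by rewrite mulr0.
  by move: rt; rewrite E setU1K // eqxx.
rewrite /cone_coef in_setD1 uv setD11 /=; case vt: (v \in t).
  by rewrite setD1K // eqxx andbT; case: (u \in t); rewrite //= mulr0.
have -> : (t == v |: t :\ v) = false.
  by apply/negbTE/eqP => E; move: vt; rewrite E setU11.
by rewrite !andbF mulr0.
Qed.

Lemma cone_homotopyE a b :
  (cone_mx *m bdry V F + bdry V F *m cone_mx) a b = homotopy_coef (sx a) (sx b).
Proof.
rewrite !mxE.
under eq_bigr do rewrite !mxE.
under [X in _ + X]eq_bigr do rewrite !mxE.
rewrite (sum_sx (fun r => cone_coef (sx a) r * bdry_coef F r (sx b))).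
rewrite (sum_sx (fun r => bdry_coef F (sx a) r * cone_coef r (sx b))).
by rewrite sum_cone_bdry sum_bdry_cone.
Qed.

Lemma cone_retractE a b :
  (1%:M - (cone_mx *m bdry V F + bdry V F *m cone_mx)) a b =
  (sx a == sx b)%:R - homotopy_coef (sx a) (sx b).
Proof.
rewrite -cone_homotopyE; set M := (cone_mx *m _ + _).
have -> : (1%:M - M) a b = (a == b)%:R - M a b by rewrite !mxE.
by rewrite (inj_eq enum_val_inj).
Qed.

Lemma homotopy_coef_notin (s t : {set V}) : u \notin s -> homotopy_coef s t = 0.
Proof.
move=> us; rewrite /homotopy_coef (negbTE us) /= add0r.
case: ifP => [/andP[ut vt]|] //.
case: (eqVneq (bdry_coef F s (t :\ v)) 0) => [->|/bdry_coef_neq0[x xs E]].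
  by rewrite mul0r.
have : u \in t :\ v by rewrite in_setD1 uv ut.
by rewrite E in_setD1 => /andP[_ us']; rewrite us' in us.
Qed.

Lemma homotopy_coef_diag (s : {set V}) : u \in s -> homotopy_coef s s = 1.
Proof.
move=> us; rewrite /homotopy_coef us /=; case vs: (v \in s) => /=.
  rewrite add0r bdry_coef_face //; last by apply/set0Pn; exists u; rewrite in_setD1 uv us.
  by rewrite /cone_sign setD1K // sqr_bsign.
have nonempty : (v |: s) :\ v != set0 by rewrite setU1K ?vs //; apply/set0Pn; exists u.
have face := bdry_coef_face F (setU11 v s) nonempty; rewrite setU1K ?vs // in face.
by rewrite face /cone_sign sqr_bsign addr0.
Qed.

Lemma homotopy_coef_offdiag_in (s t : {set V}) :
  u \in s -> v \in s -> s != t -> homotopy_coef s t = 0.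
Proof.
move=> us vs st; rewrite /homotopy_coef vs andbF add0r.
case: ifP => [/andP[ut vt]|] //.
case: (eqVneq (bdry_coef F s (t :\ v)) 0) => [->|/bdry_coef_neq0[x xs E]].
  by rewrite mul0r.
case: (eqVneq x v) => [xv|xv].
  by move: st; rewrite -(setD1K vt) -(setD1K vs) E xv eqxx.
have : v \in s :\ x by rewrite in_setD1 eq_sym xv vs.
by rewrite -E setD11.
Qed.

(* Both terms come from the square s, s :\ x, v |: s, (v |: s) :\ x and cancel. *)
Lemma homotopy_coef_square (s : {set V}) (x : V) :
  u \in s -> v \notin s -> x \in s -> x != u -> homotopy_coef s ((v |: s) :\ x) = 0.
Proof.
move=> us vs xs xu.
have xv : x != v by apply: contraNneq vs => <-.
have vsx : v \notin s :\ x by rewrite in_setD1 (negbTE vs) andbF.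
have tv : (v |: s) :\ x :\ v = s :\ x.
  by apply/setP => z; rewrite !inE; case: (eqVneq z v) => [->|] //=; rewrite (negbTE vs) andbF.
rewrite /homotopy_coef us vs !inE eq_sym xu us orbT eq_sym xv eqxx /= tv.
rewrite bdry_coef_face; last 2 first.
- exact: (setU1r v xs).
- by apply/set0Pn; exists v; rewrite in_setD1 eq_sym xv setU11.
rewrite bdry_coef_face //; last by apply/set0Pn; exists u; rewrite in_setD1 eq_sym xu us.
rewrite /cone_sign !bsignE (nbelowU1 v vsx) !(nbelowU1 _ vs) (nbelowD1 v xs).
rewrite ltnn !addn0 !exprD.
by case/orP: (enum_rank_ltgt xv) => /andP[-> /negbTE ->] /=; ring.
Qed.

Lemma homotopy_coef_offdiag_notin (s t : {set V}) :
  u \in s -> v \notin s -> s != t -> t != (v |: s) :\ u -> homotopy_coef s t = 0.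
Proof.
move=> us vs st tne.
case ex: [exists x in s, (x != u) && (t == (v |: s) :\ x)].
  by case/exists_inP: ex => x xs /andP[xu /eqP ->]; exact: homotopy_coef_square.
rewrite /homotopy_coef us vs /=.
have -> : bdry_coef F (v |: s) t = 0.
  apply/eqP; apply: contraFT ex => /bdry_coef_neq0[y ys Et].
  case/setU1P: ys => [yv|ys].
    by move: st; rewrite Et yv setU1K ?eqxx.
  apply/exists_inP; exists y => //; rewrite Et eqxx andbT.
  by apply: contraNneq tne => <-; rewrite Et.
rewrite mulr0 add0r; case: ifP => [/andP[ut vt]|] //.
case: (eqVneq (bdry_coef F s (t :\ v)) 0) => [->|/bdry_coef_neq0[y ys Ev]].
  by rewrite mul0r.
move/negbT: ex; apply: contraNeq => _; apply/exists_inP; exists y => //.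
have uy : u != y.
  have : u \in t :\ v by rewrite in_setD1 uv ut.
  by rewrite Ev in_setD1 => /andP[].
have vy : v != y by apply: contraNneq vs => ->.
rewrite eq_sym uy /=; apply/eqP/setP => z.
rewrite !inE; case: (eqVneq z v) => [->|zv] /=; first by rewrite vt vy.
by have := congr1 (fun A : {set V} => z \in A) Ev; rewrite /= !inE zv.
Qed.

End Cone.

Section SublevelCliques.
Variables (V : finType) (e : rel V) (R : realType) (f : V -> R).

Lemma sublevel_cliqueP (W : {set V}) a (s : {set V}) :
  reflect [/\ s != set0, s \subset W, (forall x, x \in s -> f x <= a) &
     (forall x y, x \in s -> y \in s -> x != y -> e x y)]
  (s \in sublevel_clique_complex e W f a).
Proof.
rewrite inE; apply: (iffP and4P) => [[H0 H1 /forall_inP H2 /forall_inP H3]|[H0 H1 H2 H3]].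
  split => // x y xs ys xy.
  by move: (H3 x xs) => /forall_inP/(_ y ys)/implyP; apply.
split => //; first by apply/forall_inP.
apply/forall_inP => x xs; apply/forall_inP => y ys; apply/implyP; exact: H3.
Qed.

Lemma sublevel_clique_mono (W : {set V}) a b (s : {set V}) : a <= b ->
  s \in sublevel_clique_complex e W f a -> s \in sublevel_clique_complex e W f b.
Proof.
move=> ab /sublevel_cliqueP[s0 sW Hfs Hc]; apply/sublevel_cliqueP; split => //.
by move=> x /Hfs /le_trans; apply.
Qed.

Lemma sublevel_clique_sub (W : {set V}) a (s t : {set V}) :
  s \in sublevel_clique_complex e W f a -> t \subset s -> t != set0 ->
  t \in sublevel_clique_complex e W f a.
Proof.
case/sublevel_cliqueP => _ sW Hfs Hc /subsetP ts t0; apply/sublevel_cliqueP; split => //.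
- exact: subset_trans (introT subsetP ts) sW.
- by move=> x xt; apply: Hfs; apply: ts.
- by move=> x y xt yt; apply: Hc; apply: ts.
Qed.

Lemma sublevel_clique_setD1 a (u : V) (s : {set V}) :
  (s \in sublevel_clique_complex e ([set: V] :\ u) f a) =
  (s \in sublevel_clique_complex e [set: V] f a) && (u \notin s).
Proof.
rewrite !inE subsetD1 subsetT /=.
by case: (u \in s); rewrite /= ?andbF ?andbT.
Qed.

Variables (u v : V).
Hypothesis e_sym : symmetric e.
Hypothesis Hdom : dominated e u v.
Hypothesis Hf : f v <= f u.

Let K a := sublevel_clique_complex e [set: V] f a.
Let K' a := sublevel_clique_complex e ([set: V] :\ u) f a.

Lemma dominating_neq : u != v. Proof. by case: Hdom; rewrite eq_sym. Qed.

Lemma clique_adj_dominating a (s : {set V}) y :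
  s \in K a -> u \in s -> y \in s -> y != v -> e v y.
Proof.
case/sublevel_cliqueP => _ _ _ Hc us ys yv.
case: Hdom => _ /subsetP sub.
have : y \in closed_nbhd e u.
  rewrite /closed_nbhd !inE; case: (eqVneq y u) => //= yu.
  by apply: Hc => //; rewrite eq_sym.
by move/sub; rewrite /closed_nbhd !inE (negbTE yv).
Qed.

Lemma clique_cone a (s : {set V}) : s \in K a -> u \in s -> v |: s \in K a.
Proof.
move=> sK us; have /sublevel_cliqueP[_ _ Hfs Hc] := sK.
apply/sublevel_cliqueP; split.
- by apply/set0Pn; exists v; rewrite setU11.
- exact: subsetT.
- by move=> x /setU1P[->|/Hfs //]; exact: le_trans Hf (Hfs _ us).
- move=> x y /setU1P[->|xs] /setU1P[->|ys] xy.
  + by rewrite eqxx in xy.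
  + by apply: (clique_adj_dominating sK us ys); rewrite eq_sym.
  + by rewrite e_sym; apply: (clique_adj_dominating sK us xs).
  + exact: Hc.
Qed.

Lemma clique_swap a (s : {set V}) : s \in K a -> u \in s -> (v |: s) :\ u \in K' a.
Proof.
move=> sK us; rewrite sublevel_clique_setD1 setD11 andbT.
apply: (sublevel_clique_sub (clique_cone sK us)); first exact: subD1set.
by apply/set0Pn; exists v; rewrite !inE eq_sym dominating_neq eqxx.
Qed.

Variable F : fieldType.

Lemma cone_coef_support a k (s t : {set V}) :
  (s \in K a) && (#|s| == k.+1) -> cone_coef F u v s t != 0 ->
  (t \in K a) && (#|t| == k.+2).
Proof.
case/andP => sK sk; rewrite /cone_coef.
case: ifP => [/and3P[us vs /eqP ->] _|]; last by rewrite eqxx.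
by rewrite (clique_cone sK us) cardsU1 (negbTE vs) (eqP sk) /= add1n.
Qed.

Lemma retract_coef_support a k (s t : {set V}) :
  (s \in K a) && (#|s| == k.+1) ->
  (s == t)%:R - homotopy_coef F u v s t != 0 -> (t \in K' a) && (#|t| == k.+1).
Proof.
have uv := dominating_neq.
case/andP=> sK sk; case us: (u \in s); last first.
  rewrite homotopy_coef_notin ?us // subr0.
  case: (eqVneq s t) => [<- _|_]; last by rewrite mulr0n eqxx.
  by rewrite sublevel_clique_setD1 sK us sk.
case: (eqVneq s t) => [<-|st]; first by rewrite homotopy_coef_diag // subrr eqxx.
case vs: (v \in s).
  by rewrite homotopy_coef_offdiag_in // subrr eqxx.
case: (eqVneq t ((v |: s) :\ u)) => [->|tne]; last first.
  by rewrite homotopy_coef_offdiag_notin ?vs // subrr eqxx.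
rewrite clique_swap //= => _.
have := cardsD1 u (v |: s); rewrite !inE us orbT cardsU1 vs (eqP sk) /=.
by move=> card; apply/eqP; lia.
Qed.

Lemma pbetti_delete_dominated k a b :
  a <= b -> pbetti F (K a) (K b) k = pbetti F (K' a) (K' b) k.
Proof.
move=> ab; have uv := dominating_neq; rewrite /pbetti /cycles /boundaries.
have inK' c (s : {set V}) k' : (s \in K' c) && (#|s| == k') -> (s \in K c) && (#|s| == k').
  by rewrite sublevel_clique_setD1 -andbA => /and3P[-> _ ->].
apply: (@persistent_rank_retract F (nS V) (bdry V F) (cone_mx F u v)).
- exact: bdry_mul_bdry.
- by apply: sub_kchains => i j /kchains_neq0/inK'.
- by apply: sub_kchains => i j /kchains_neq0/inK'.
- apply: sub_kchains => i j /kchains_mul_neq0[Si]; rewrite cone_retractE //.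
  exact: retract_coef_support.
- apply: sub_kchains => i j /kchains_mul_neq0[Si]; rewrite cone_retractE //.
  exact: retract_coef_support.
- apply: sub_kchains => i j /kchains_mul_neq0[Si]; rewrite mxE.
  by case/(cone_coef_support Si)/andP => tK ->; rewrite (sublevel_clique_mono ab tK).
- apply/matrixP => i j; rewrite mul_diag_mx mxE cone_homotopyE // !mxE.
  case: ifP => [/andP[iK _]|]; last by rewrite mul0r.
  move: iK; rewrite sublevel_clique_setD1 => /andP[_ /homotopy_coef_notin->] //.
  by rewrite mulr0.
Qed.

End SublevelCliques.

Lemma PD_eq_pbetti (F : fieldType) (V : finType) (e : rel V) (W W' : {set V})
    (R : realType) (f : V -> R) (alpha : nat -> R) (m k : nat) :
  (forall i j, (i <= j <= m)%N ->
     pbetti F (sublevel_clique_complex e W f (alpha i))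
              (sublevel_clique_complex e W f (alpha j)) k =
     pbetti F (sublevel_clique_complex e W' f (alpha i))
              (sublevel_clique_complex e W' f (alpha j)) k) ->
  PD F e W f alpha m k = PD F e W' f alpha m k.
Proof.
move=> Hb; apply: functional_extensionality => i.
apply: functional_extensionality => j; rewrite /PD /=.
case: ifP => [/andP[ij jm]|_].
  rewrite (Hb i j.-1) ?(Hb i j); try by apply/andP; split; lia.
  case: (i =P 0%N) => // i0.
  by rewrite (Hb i.-1 j.-1) ?(Hb i.-1 j) //; apply/andP; split; lia.
case: ifP => [/andP[im _]|_] //.
rewrite (Hb i m); last by apply/andP; split; lia.
case: (i =P 0%N) => // i0.
by rewrite (Hb i.-1 m) //; apply/andP; split; lia.
Qed.

Theorem theorem2 (V : finType) (e : rel V) (R : realType) (f : V -> R)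
  (m : nat) (alpha : nat -> R)
  (He : simple_graph e)
  (Halpha : forall i j : nat, (i < j <= m)%N -> alpha i < alpha j)
  (Hmin : (exists w, f w = alpha 0%N) /\ (forall w, alpha 0%N <= f w))
  (Hmax : (exists w, f w = alpha m) /\ (forall w, f w <= alpha m))
  (u v : V) (Hdom : dominated e u v) (Hf : f v <= f u) :
  forall (F : fieldType) (k : nat),
    PD F e [set: V] f alpha m k = PD F e ([set: V] :\ u) f alpha m k.
Proof.
(* Only the monotonicity of the thresholds matters. *)
move=> F k; apply: PD_eq_pbetti => i j /andP[ij jm].
apply: (pbetti_delete_dominated He.1 Hdom Hf).
case: (ltngtP i j) ij => // [lt_ij _|-> _]; last exact: lexx.
by apply/ltW/Halpha; rewrite lt_ij.
Qed.
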